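(* Let $A$ be a system in a process theory with discarding that admits a broadcasting map $b : A \to A \otimes A$, i.e. $(\mathrm{id}_A \otimes \top_A)\circ b = \mathrm{id}_A = (\top_A \otimes \mathrm{id}_A)\circ b$. Suppose the theory is non-trivial in the sense that there is a causal process $f : B \to A$ which is not of the form $\tau \circ \top_B$ for any state $\tau$ of $A$. Then $\mathrm{id}_A$ is not pure in the following sense: it is not the case that for every system $E$ and every process $g : A \to A \otimes E$ with $(\mathrm{id}_A \otimes \top_E)\circ g = \mathrm{id}_A$ there exists a causal state $\rho$ of $E$ with $g = \mathrm{id}_A \otimes \rho$.
   Context: A process theory is a strict symmetric monoidal category: objects are systems, morphisms are processes, $\circ$ is sequential composition, $\otimes$ parallel composition, $I$ the unit. A state of $A$ is a process $I \to A$. A process theory with discarding has, for every system $A$, a distinguished effect $\top_A : A \to I$ with $\top_{A\otimes B} = \top_A \otimes \top_B$; a process $f:A\to B$ is causal if $\top_B \circ f = \top_A$ (for a state $\rho$ of $E$: $\top_E\circ\rho = \mathrm{id}_I$). The (dilation-based) notion of purity used here: a process $f : A \to B$ is pure if every dilation $g : A \to B \otimes E$ of $f$ (meaning $(\mathrm{id}_B \otimes \top_E)\circ g = f$) separates as $g = f \otimes \rho$ for some causal state $\rho$ of $E$. *)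

Set Implicit Arguments.
Set Universe Polymorphism.

(* A strict symmetric monoidal category is the special case where
   these are identities; by Mac Lane's coherence theorem nothing is lost. *)
Record ProcessTheory := {
  obj : Type;
  hom : obj -> obj -> Type;
  comp : forall {A B C : obj}, hom B C -> hom A B -> hom A C;
  idm : forall A : obj, hom A A;
  tens : obj -> obj -> obj;
  I : obj;
  tensh : forall {A B C D : obj}, hom A B -> hom C D -> hom (tens A C) (tens B D);
  comp_assoc : forall A B C D (f : hom A B) (g : hom B C) (h : hom C D),
      comp h (comp g f) = comp (comp h g) f;
  comp_idl : forall A B (f : hom A B), comp (idm B) f = f;
  comp_idr : forall A B (f : hom A B), comp f (idm A) = f;
  tensh_id : forall A B, tensh (idm A) (idm B) = idm (tens A B);
  tensh_comp : forall A B C A' B' C' (f : hom A B) (g : hom B C)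
      (f' : hom A' B') (g' : hom B' C'),
      tensh (comp g f) (comp g' f') = comp (tensh g g') (tensh f f');
  assoc : forall A B C, hom (tens (tens A B) C) (tens A (tens B C));
  assoc_inv : forall A B C, hom (tens A (tens B C)) (tens (tens A B) C);
  assoc_iso1 : forall A B C, comp (assoc_inv A B C) (assoc A B C) = idm _;
  assoc_iso2 : forall A B C, comp (assoc A B C) (assoc_inv A B C) = idm _;
  assoc_nat : forall A B C A' B' C' (f : hom A A') (g : hom B B') (h : hom C C'),
      comp (assoc A' B' C') (tensh (tensh f g) h)
      = comp (tensh f (tensh g h)) (assoc A B C);
  lunit : forall A, hom (tens I A) A;
  lunit_inv : forall A, hom A (tens I A);
  lunit_iso1 : forall A, comp (lunit_inv A) (lunit A) = idm _;
  lunit_iso2 : forall A, comp (lunit A) (lunit_inv A) = idm _;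
  lunit_nat : forall A B (f : hom A B),
      comp (lunit B) (tensh (idm I) f) = comp f (lunit A);
  runit : forall A, hom (tens A I) A;
  runit_inv : forall A, hom A (tens A I);
  runit_iso1 : forall A, comp (runit_inv A) (runit A) = idm _;
  runit_iso2 : forall A, comp (runit A) (runit_inv A) = idm _;
  runit_nat : forall A B (f : hom A B),
      comp (runit B) (tensh f (idm I)) = comp f (runit A);
  pentagon : forall A B C D,
      comp (assoc A B (tens C D)) (assoc (tens A B) C D)
      = comp (tensh (idm A) (assoc B C D))
             (comp (assoc A (tens B C) D) (tensh (assoc A B C) (idm D)));
  triangle : forall A B,
      comp (tensh (idm A) (lunit B)) (assoc A I B) = tensh (runit A) (idm B);
  unit_coh : lunit I = runit I;
  swap : forall A B, hom (tens A B) (tens B A);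
  swap_nat : forall A B A' B' (f : hom A A') (g : hom B B'),
      comp (swap A' B') (tensh f g) = comp (tensh g f) (swap A B);
  swap_invol : forall A B, comp (swap B A) (swap A B) = idm (tens A B);
  hexagon : forall A B C,
      comp (assoc B C A) (comp (swap A (tens B C)) (assoc A B C))
      = comp (tensh (idm B) (swap A C))
             (comp (assoc B A C) (tensh (swap A B) (idm C)));
  swap_unit : forall A, comp (lunit A) (swap A I) = runit A;
  disc : forall A : obj, hom A I;
  disc_tens : forall A B, disc (tens A B) = comp (lunit I) (tensh (disc A) (disc B))
}.

Arguments comp {p A B C} _ _.
Arguments idm {p} A.
Arguments tens {p} _ _.
Arguments I {p}.
Arguments tensh {p A B C D} _ _.
Arguments runit {p} A.
Arguments runit_inv {p} A.
Arguments lunit {p} A.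
Arguments disc {p} A.

Section Defs.
Context {T : ProcessTheory}.

Definition state (A : obj T) := hom T I A.

Definition causal {A B : obj T} (f : hom T A B) : Prop :=
  comp (disc B) f = disc A.

Definition causal_state {E : obj T} (rho : state E) : Prop :=
  comp (disc E) rho = idm I.

(* g : A -> B ⊗ E is a dilation of f : A -> B: (id_B ⊗ ⊤_E) ∘ g = f
   (with the right unitor B ⊗ I ≅ B made explicit) *)
Definition dilation {A B E : obj T} (g : hom T A (tens B E)) (f : hom T A B) : Prop :=
  comp (runit B) (comp (tensh (idm B) (disc E)) g) = f.

Definition pure {A B : obj T} (f : hom T A B) : Prop :=
  forall (E : obj T) (g : hom T A (tens B E)),
    dilation g f ->
    exists rho : state E, causal_state rho /\
      g = comp (tensh f rho) (runit_inv A).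

Definition broadcasting {A : obj T} (b : hom T A (tens A A)) : Prop :=
  comp (runit A) (comp (tensh (idm A) (disc A)) b) = idm A /\
  comp (lunit A) (comp (tensh (disc A) (idm A)) b) = idm A.
End Defs.


(** If broadcasting on [A] were a product [id_A ⊗ rho], its other marginal
    would be [rho ∘ ⊤_A]; broadcasting forces this to be [id_A], so every
    causal process into [A] would factor through discarding, contradicting
    non-triviality. *)

Section Marginals.
Context {T : ProcessTheory}.

Lemma lunit_tensh_runit_inv {A E : obj T} (x : hom T A I) (rho : state E) :
  comp (lunit E) (comp (tensh x rho) (runit_inv A)) = comp rho x.
Proof.
  assert (Hsplit : tensh x rho = comp (tensh (idm I) rho) (tensh x (idm I))).
  { rewrite <- tensh_comp, comp_idl, comp_idr. reflexivity. }
  rewrite Hsplit, !comp_assoc, lunit_nat, unit_coh.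
  rewrite <- (@comp_assoc T _ _ _ _ (tensh x (idm I))), runit_nat.
  rewrite <- !comp_assoc, runit_iso2, comp_idr.
  reflexivity.
Qed.

Lemma discard_left_tensh_runit_inv {A B E : obj T} (h : hom T A B) (rho : state E) :
  comp (lunit E) (comp (tensh (disc B) (idm E)) (comp (tensh h rho) (runit_inv A)))
  = comp rho (comp (disc B) h).
Proof.
  rewrite (@comp_assoc T _ _ _ _ (runit_inv A)), <- tensh_comp, comp_idl.
  apply lunit_tensh_runit_inv.
Qed.

Lemma broadcasting_product_idm {A : obj T} (rho : state A) :
  broadcasting (comp (tensh (idm A) rho) (runit_inv A)) ->
  comp rho (disc A) = idm A.
Proof.
  intros [_ Hleft].
  rewrite discard_left_tensh_runit_inv, comp_idr in Hleft.
  exact Hleft.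
Qed.

Lemma causal_factors_disc {A B : obj T} (rho : state A) (f : hom T B A) :
  comp rho (disc A) = idm A -> causal f -> f = comp rho (disc B).
Proof.
  intros Hid Hf.
  rewrite <- Hf, comp_assoc, Hid, comp_idl.
  reflexivity.
Qed.

End Marginals.

Theorem proposition6 (T : ProcessTheory) (A : obj T)
  (b : hom T A (tens A A)) (Hb : broadcasting b)
  (B : obj T) (f : hom T B A) (Hf : causal f)
  (Hnontriv : forall tau : state A, f <> comp tau (disc B)) :
  ~ pure (idm A).
Proof.
  intros Hpure.
  destruct (Hpure A b (proj1 Hb)) as [rho [_ Hb_product]].
  rewrite Hb_product in Hb.
  apply (Hnontriv rho), causal_factors_disc.
  - exact (broadcasting_product_idm _ Hb).
  - exact Hf.
Qed.
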